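(* Suppose that the modal operator $\bullet$ occurs neither in any type of the typing context $\Gamma$ nor in the type expression $A$ (note that $\top=\mu X.\bullet X$ contains $\bullet$). If $\Gamma\vdash M:A$ is derivable in $\lambda$A, then $M$ is $\beta$-normalizable.
   Context: Type expressions: fix a countably infinite set of type variables $X,Y,Z,\dots$. Pseudo type expressions are generated by $A::=X\mid A\to A\mid \bullet A\mid \mu X.A$ ($\mu$ binds $X$; $\alpha$-convertible expressions are identified; $\to$ associates to the right; $\bullet$ binds tighter than $\to$, which binds tighter than $\mu$). $A[B/X]$ denotes capture-avoiding substitution. $\top$ abbreviates $\mu X.\bullet X$, and $\bullet^n A$ denotes $A$ prefixed by $n$ copies of $\bullet$. The tail $t(A)$ is defined by $t(X)=X$, $t(A\to B)=t(B)$, $t(\bullet A)=\bullet t(A)$, $t(\mu X.A)=\mu X.t(A)$; it always has the form $\bullet^{m_0}\mu X_1.\bullet^{m_1}\mu X_2.\cdots\mu X_n.\bullet^{m_n}Y$. $A$ is a $\top$-variant iff $Y=X_i$ for some $1\le i\le n$ with $X_i\notin\{X_{i+1},\dots,X_n\}$ and $m_i+\dots+m_n\ge 1$. $A$ is proper in $X$ iff: a variable $Y$ is proper in $X$ iff $Y\neq X$; $\bullet A$ is always proper in $X$; $A\to B$ is proper in $X$ iff both $A,B$ are proper in $X$ or $B$ is a $\top$-variant; for $Y\ne X$, $\mu Y.A$ is proper in $X$ iff $A$ is proper in $X$ or $\mu Y.A$ is a $\top$-variant. Type expressions are the least set of pseudo type expressions containing all type variables, closed under $\to$ and $\bullet$,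 and containing $\mu X.A$ whenever it contains $A$ and $A$ is proper in $X$. Equality: $\cong$ is the least relation on type expressions such that: $A\cong A$; $A\cong B$ implies $B\cong A$; $A\cong B$ and $B\cong C$ imply $A\cong C$; $A\cong B$ implies $\bullet A\cong\bullet B$; $A\cong C$ and $B\cong D$ imply $A\to B\cong C\to D$; $A\to\top\cong\top$; $\mu X.A\cong A[\mu X.A/X]$; and if $A\cong C[A/X]$ with $C$ proper in $X$, then $A\cong\mu X.C$. $\simeq$ is the least relation satisfying the same closure conditions and additionally $\bullet(A\to B)\simeq\bullet A\to\bullet B$. Subtyping: a subtyping assumption $\gamma$ is a finite set of pairs $X\preceq Y$ of type variables in which each type variable occurs at most once; $FTV(\gamma)$ is the set of variables occurring in it. Judgments $\gamma\vdash A\preceq B$ are derived by the rules: $\gamma\cup\{X\preceq Y\}\vdash X\preceq Y$; $\gamma\vdash A\preceq\top$; from $A\simeq B$ infer $\gamma\vdash A\preceq B$; from $\gamma_1\vdash A\preceq B$ and $\gamma_2\vdash B\preceq C$ infer $\gamma_1\cup\gamma_2\vdash A\preceq C$; from $\gamma\vdash A\preceq B$ infer $\gamma\vdash\bullet A\preceq\bullet B$; from $\gamma_1\vdash A'\preceq A$ and $\gamma_2\vdash B\preceq B'$ infer $\gamma_1\cup\gamma_2\vdash A\to B\preceq A'\to B'$; from $\gamma\cup\{X\preceq Y\}\vdash A\preceq B$ infer $\gamma\vdash\mu X.A\preceq\mu Y.B$, provided $X\notin FTV(\gamma)\cup FTV(B)$, $Y\notin FTV(\gamma)\cup FTV(A)$,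 $A$ is proper in $X$ and $B$ is proper in $Y$; and $\gamma\vdash A\preceq\bullet A$. All sets $\gamma\cup\{X\preceq Y\}$, $\gamma_1\cup\gamma_2$ must be well-formed subtyping assumptions. $A\preceq B$ means $\{\}\vdash A\preceq B$ is derivable. Typing system $\lambda$A: untyped $\lambda$-terms $M::=x\mid\lambda x.M\mid MM$ (identified up to $\alpha$-conversion). A typing context $\Gamma$ is a finite map from individual variables to type expressions, written $\{x_1:A_1,\dots,x_n:A_n\}$; $\bullet\Gamma$ is $\{x_1:\bullet A_1,\dots,x_n:\bullet A_n\}$; unions of contexts must be well-formed (a variable receives at most one type). Rules: (var) $\Gamma\cup\{x:A\}\vdash x:A$; (shift) from $\bullet\Gamma\vdash M:\bullet A$ infer $\Gamma\vdash M:A$; ($\top$) $\Gamma\vdash M:\top$; ($\preceq$) from $\Gamma\vdash M:A$ and $A\preceq B$ infer $\Gamma\vdash M:B$; ($\to$I) from $\Gamma\cup\{x:A\}\vdash M:B$ infer $\Gamma\vdash\lambda x.M:A\to B$; ($\to$E) from $\Gamma_1\vdash M:A\to B$ and $\Gamma_2\vdash N:A$ infer $\Gamma_1\cup\Gamma_2\vdash MN:B$. *)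

(* Locally nameless representation:
   free (type / individual) variables are named by nat atoms, bound
   variables are de Bruijn indices.  Alpha-equivalent expressions are
   thereby identified.  Binders are introduced in the rules through
   [close], mirroring the named presentation of the paper. *)
From Stdlib Require Import List Arith Bool Relations.
Import ListNotations.

Inductive ty : Type :=
| TFVar : nat -> ty
| TBVar : nat -> ty
| TArr  : ty -> ty -> ty
| TBul  : ty -> ty
| TMu   : ty -> ty.          (* mu X. A  (body uses TBVar 0) *)

Fixpoint ty_open_rec (k : nat) (U : ty) (T : ty) : ty :=
  match T with
  | TFVar X => TFVar X
  | TBVar i => if Nat.eqb i k then U else TBVar i
  | TArr A B => TArr (ty_open_rec k U A) (ty_open_rec k U B)
  | TBul A => TBul (ty_open_rec k U A)
  | TMu A => TMu (ty_open_rec (S k) U A)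
  end.
(* body instantiation: for a body A of mu, [ty_open A U] is A[U/X] *)
Definition ty_open (A U : ty) : ty := ty_open_rec 0 U A.

Fixpoint ty_close_rec (k : nat) (X : nat) (T : ty) : ty :=
  match T with
  | TFVar Y => if Nat.eqb Y X then TBVar k else TFVar Y
  | TBVar i => TBVar i
  | TArr A B => TArr (ty_close_rec k X A) (ty_close_rec k X B)
  | TBul A => TBul (ty_close_rec k X A)
  | TMu A => TMu (ty_close_rec (S k) X A)
  end.
(* [TMu (ty_close X A)] is the named  mu X. A *)
Definition ty_close (X : nat) (A : ty) : ty := ty_close_rec 0 X A.

Fixpoint ty_subst (X : nat) (U : ty) (T : ty) : ty :=
  match T with
  | TFVar Y => if Nat.eqb Y X then U else TFVar Y
  | TBVar i => TBVar i
  | TArr A B => TArr (ty_subst X U A) (ty_subst X U B)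
  | TBul A => TBul (ty_subst X U A)
  | TMu A => TMu (ty_subst X U A)
  end.

Fixpoint ftv (T : ty) : list nat :=
  match T with
  | TFVar X => [X]
  | TBVar _ => []
  | TArr A B => ftv A ++ ftv B
  | TBul A => ftv A
  | TMu A => ftv A
  end.

Definition top : ty := TMu (TBul (TBVar 0)).

Fixpoint bullets (n : nat) (A : ty) : ty :=
  match n with 0 => A | S m => TBul (bullets m A) end.

Fixpoint tail (T : ty) : ty :=
  match T with
  | TFVar X => TFVar X
  | TBVar i => TBVar i
  | TArr _ B => tail B
  | TBul A => TBul (tail A)
  | TMu A => TMu (tail A)
  end.

(* On a tail  bullet^{m0} mu X1. bullet^{m1} ... mu Xn. bullet^{mn} Y :
   [L] records, for each enclosing mu-binder of the tail (innermost first),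
   whether at least one bullet occurs after it.  Y is a bound variable
   (de Bruijn index k) exactly when Y = X_i with X_i not rebound later,
   and then L[k] says m_i + ... + m_n >= 1. *)
Fixpoint tv (L : list bool) (T : ty) : bool :=
  match T with
  | TFVar _ => false
  | TBVar k => match nth_error L k with Some b => b | None => false end
  | TArr _ _ => false
  | TBul A => tv (map (fun _ => true) L) A
  | TMu A => tv (false :: L) A
  end.

Definition top_variant (A : ty) : bool := tv [] (tail A).

(* A is proper in X (bound variables are always distinct from X) *)
Fixpoint proper (X : nat) (T : ty) : bool :=
  match T with
  | TFVar Y => negb (Nat.eqb Y X)
  | TBVar _ => true
  | TBul _ => true
  | TArr A B => (proper X A && proper X B) || top_variant B
  | TMu A => proper X A || top_variant (TMu A)
  end.

Inductive is_type : ty -> Prop :=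
| it_var X : is_type (TFVar X)
| it_arr A B : is_type A -> is_type B -> is_type (TArr A B)
| it_bul A : is_type A -> is_type (TBul A)
| it_mu X A : is_type A -> proper X A = true -> is_type (TMu (ty_close X A)).

Inductive teq : ty -> ty -> Prop :=
| teq_refl A : is_type A -> teq A A
| teq_sym A B : teq A B -> teq B A
| teq_trans A B C : teq A B -> teq B C -> teq A C
| teq_bul A B : teq A B -> teq (TBul A) (TBul B)
| teq_arr A B C D : teq A C -> teq B D -> teq (TArr A B) (TArr C D)
| teq_top A : is_type A -> teq (TArr A top) top
| teq_unfold A : is_type (TMu A) -> teq (TMu A) (ty_open A (TMu A))
| teq_fix X A C : is_type A -> is_type C -> proper X C = true ->
    teq A (ty_subst X A C) -> teq A (TMu (ty_close X C))
| teq_distr A B : is_type A -> is_type B ->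
    teq (TBul (TArr A B)) (TArr (TBul A) (TBul B)).

(* a subtyping assumption: a finite set of pairs X ≼ Y (as a list,
   only membership matters) *)
Definition sassum := list (nat * nat).

Definition sa_ftv (g : sassum) : list nat :=
  flat_map (fun p => [fst p; snd p]) g.

Definition sa_wf (g : sassum) : Prop :=
  (forall p, In p g -> fst p <> snd p) /\
  (forall p q Z, In p g -> In q g ->
     (Z = fst p \/ Z = snd p) -> (Z = fst q \/ Z = snd q) -> p = q).

Definition sa_union (g g1 g2 : sassum) : Prop :=
  forall p, In p g <-> In p g1 \/ In p g2.

Inductive sub : sassum -> ty -> ty -> Prop :=
| sub_ax g X Y : sa_wf g -> In (X, Y) g -> sub g (TFVar X) (TFVar Y)
| sub_top g A : sa_wf g -> is_type A -> sub g A top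
| sub_eq g A B : sa_wf g -> teq A B -> sub g A B
| sub_trans g1 g2 g A B C : sub g1 A B -> sub g2 B C ->
    sa_union g g1 g2 -> sa_wf g -> sub g A C
| sub_bul g A B : sub g A B -> sub g (TBul A) (TBul B)
| sub_arr g1 g2 g A A' B B' : sub g1 A' A -> sub g2 B B' ->
    sa_union g g1 g2 -> sa_wf g -> sub g (TArr A B) (TArr A' B')
| sub_mu g g' X Y A B : sub g' A B -> sa_union g' g [(X, Y)] -> sa_wf g' ->
    sa_wf g ->
    ~ In X (sa_ftv g ++ ftv B) -> ~ In Y (sa_ftv g ++ ftv A) ->
    proper X A = true -> proper Y B = true ->
    sub g (TMu (ty_close X A)) (TMu (ty_close Y B))
| sub_next g A : sa_wf g -> is_type A -> sub g A (TBul A).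

Definition subtype (A B : ty) : Prop := sub [] A B.

Inductive tm : Type :=
| Var  : nat -> tm
| BVar : nat -> tm
| Lam  : tm -> tm
| App  : tm -> tm -> tm.

Fixpoint tm_close_rec (k x : nat) (M : tm) : tm :=
  match M with
  | Var y => if Nat.eqb y x then BVar k else Var y
  | BVar i => BVar i
  | Lam N => Lam (tm_close_rec (S k) x N)
  | App N P => App (tm_close_rec k x N) (tm_close_rec k x P)
  end.
(* [Lam (tm_close x M)] is the named  lambda x. M *)
Definition tm_close (x : nat) (M : tm) : tm := tm_close_rec 0 x M.

Fixpoint tm_lc_at (k : nat) (M : tm) : bool :=
  match M with
  | Var _ => true
  | BVar i => Nat.ltb i k
  | Lam N => tm_lc_at (S k) N
  | App N P => tm_lc_at k N && tm_lc_at k P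
  end.
Definition is_term (M : tm) : Prop := tm_lc_at 0 M = true.

Definition ctx := list (nat * ty).

Definition ctx_ok (G : ctx) : Prop :=
  (forall x A B, In (x, A) G -> In (x, B) G -> A = B) /\
  (forall x A, In (x, A) G -> is_type A).

Definition ctx_union (G G1 G2 : ctx) : Prop :=
  forall p, In p G <-> In p G1 \/ In p G2.

Definition bul_ctx (G : ctx) : ctx := map (fun p => (fst p, TBul (snd p))) G.

Inductive typing : ctx -> tm -> ty -> Prop :=
| ty_var G x A : ctx_ok G -> In (x, A) G -> typing G (Var x) A
| ty_shift G M A : typing (bul_ctx G) M (TBul A) -> typing G M A
| ty_top G M : ctx_ok G -> is_term M -> typing G M top
| ty_sub G M A B : typing G M A -> subtype A B -> typing G M B
| ty_abs G G' x M A B : typing G' M B -> ctx_union G' G [(x, A)] ->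
    ctx_ok G' -> ctx_ok G -> typing G (Lam (tm_close x M)) (TArr A B)
| ty_app G1 G2 G M N A B : typing G1 M (TArr A B) -> typing G2 N A ->
    ctx_union G G1 G2 -> ctx_ok G -> typing G (App M N) B.

Fixpoint tm_lift (c : nat) (M : tm) : tm :=
  match M with
  | Var y => Var y
  | BVar i => if Nat.leb c i then BVar (S i) else BVar i
  | Lam N => Lam (tm_lift (S c) N)
  | App N P => App (tm_lift c N) (tm_lift c P)
  end.

Fixpoint tm_bsubst (k : nat) (N : tm) (M : tm) : tm :=
  match M with
  | Var y => Var y
  | BVar i => if Nat.eqb i k then N
              else if Nat.ltb k i then BVar (pred i) else BVar i
  | Lam P => Lam (tm_bsubst (S k) (tm_lift 0 N) P)
  | App P Q => App (tm_bsubst k N P) (tm_bsubst k N Q)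
  end.

Inductive beta : tm -> tm -> Prop :=
| beta_redex M N : beta (App (Lam M) N) (tm_bsubst 0 N M)
| beta_appl M M' N : beta M M' -> beta (App M N) (App M' N)
| beta_appr M N N' : beta N N' -> beta (App M N) (App M N')
| beta_lam M M' : beta M M' -> beta (Lam M) (Lam M').

Definition beta_normal (M : tm) : Prop := forall N, ~ beta M N.

Definition beta_normalizable (M : tm) : Prop :=
  exists N, clos_refl_trans tm beta M N /\ beta_normal N.

Fixpoint bullet_free (T : ty) : bool :=
  match T with
  | TFVar _ | TBVar _ => true
  | TArr A B => bullet_free A && bullet_free B
  | TBul _ => false
  | TMu A => bullet_free A
  end.

From Pilot Require Import Defs.
From Stdlib Require Import List Arith Bool Relations Lia Wf_nat.
From Stdlib Require Import FunctionalExtensionality PropExtensionality.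
Import ListNotations.

(* Types are interpreted as step-indexed sets of lambda-terms, a realizability
   model in the style of Nakano and Appel-McAllester: [•] lowers the index by
   one, an arrow quantifies over all smaller indices, and [μX.A] denotes the
   unique fixed point of [U ↦ ⟦A⟧[X := U]], which exists because properness of
   A in X makes this map contractive.  Type equality, subtyping and typing are
   sound for the model as long as type variables denote sets of terms that are
   downward closed in the index and closed under beta-expansion.
   Now let every type variable denote the weakly normalizing terms.  A •-free
   type is an ordinary simple type (properness without • forbids a μ-bound
   variable to occur at all), so by Tait's argument its interpretation lies
   between the neutral normalizable terms and the normalizable terms.  The
   free variables of the context are neutral, hence realize their types, and
   soundness of typing finishes the argument. *)

(** * Step-indexed predicates and guarded fixed points *)

Definition sem := nat -> tm -> Prop.

Definition full : sem := fun _ _ => True.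

Lemma sem_ext (U V : sem) : (forall n M, U n M <-> V n M) -> U = V.
Proof.
  intros H. apply functional_extensionality; intro n.
  apply functional_extensionality; intro M.
  apply propositional_extensionality, H.
Qed.

Definition dist (n : nat) (U V : sem) : Prop :=
  forall k M, k < n -> (U k M <-> V k M).

Definition contractive (F : sem -> sem) : Prop :=
  forall n U V, dist n U V -> dist (S n) (F U) (F V).

Lemma dist_mono n m U V : m <= n -> dist n U V -> dist m U V.
Proof. intros Hm H k M Hk. apply H. lia. Qed.

Lemma dist_refl n U : dist n U U.
Proof. intros k M _. reflexivity. Qed.

Lemma dist_trans n U V W : dist n U V -> dist n V W -> dist n U W.
Proof. intros H1 H2 k M Hk. rewrite (H1 k M Hk). apply H2, Hk. Qed.

Lemma dist_0 U V : dist 0 U V.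
Proof. intros k M Hk. lia. Qed.

Fixpoint iterS (j : nat) (F : sem -> sem) (U : sem) : sem :=
  match j with 0 => U | S j' => F (iterS j' F U) end.

Definition mufix (F : sem -> sem) : sem := fun n => iterS (S n) F full n.

Lemma iterS_dist F : contractive F -> forall j U V, dist j (iterS j F U) (iterS j F V).
Proof.
  intros HF. induction j as [|j IH]; intros U V; simpl.
  - apply dist_0.
  - apply HF, IH.
Qed.

Lemma iterS_add F j p U : iterS (j + p) F U = iterS j F (iterS p F U).
Proof. induction j; simpl; congruence. Qed.

Lemma mufix_iterS F : contractive F -> forall n m M, n < m ->
  (mufix F n M <-> iterS m F full n M).
Proof.
  intros HF n m M Hnm. unfold mufix.
  replace m with (S n + (m - S n)) by lia. rewrite iterS_add.
  apply iterS_dist; auto.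
Qed.

Lemma mufix_eq F : contractive F -> F (mufix F) = mufix F.
Proof.
  intros HF. apply sem_ext. intros n M.
  apply (HF n (mufix F) (iterS n F full)); [|lia].
  intros k M' Hk. apply mufix_iterS; auto.
Qed.

Lemma mufix_unique F U : contractive F -> F U = U -> U = mufix F.
Proof.
  intros HF HU.
  assert (H : forall n, dist n U (mufix F)).
  { induction n. apply dist_0. rewrite <- HU, <- (mufix_eq F HF). apply HF; auto. }
  apply sem_ext. intros n M. apply (H (S n)). lia.
Qed.

Lemma mufix_dist F G n : contractive F -> contractive G ->
  (forall U, dist n (F U) (G U)) -> dist n (mufix F) (mufix G).
Proof.
  intros HF HG H.
  assert (Hm : forall m, m <= n -> dist m (mufix F) (mufix G)).
  { induction m as [|m IH]; intros Hm. apply dist_0.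
    rewrite <- (mufix_eq F HF), <- (mufix_eq G HG).
    apply dist_trans with (F (mufix G)).
    - apply HF, IH. lia.
    - apply dist_mono with n; auto. }
  apply Hm; auto.
Qed.

Definition trunc (m : nat) (U : sem) : sem := fun k M => k < m /\ U k M.

Lemma dist_trunc m U : dist m (trunc m U) U.
Proof. intros k M Hk. unfold trunc. tauto. Qed.

(* Löb induction: to compare two guarded fixed points at index m one may
   assume the comparison below m, in the form of the truncated fixed point. *)
Lemma mufix_incl F G n : contractive F ->
  (forall m, m <= n -> (forall k M, k < m -> mufix F k M -> mufix G k M) ->
     forall M, F (trunc m (mufix F)) m M -> mufix G m M) ->
  forall M, mufix F n M -> mufix G n M.
Proof.
  intros HF Hstep.
  enough (H : forall m, m <= n -> forall M, mufix F m M -> mufix G m M) by auto.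
  intros m. induction m as [m IH] using lt_wf_ind. intros Hmn M HM.
  apply Hstep; auto.
  - intros k M' Hk. apply IH; auto. lia.
  - rewrite <- (mufix_eq F HF) in HM.
    apply (HF m _ _ (dist_trunc m (mufix F))); auto.
Qed.

(** * The interpretation of types *)

Definition svar (U : sem) : sem := fun n M => is_term M /\ U n M.

Definition arr (U V : sem) : sem := fun n M =>
  is_term M /\ forall k N, k <= n -> U k N -> V k (App M N).

Definition bul (U : sem) : sem := fun n M =>
  match n with 0 => is_term M | S m => U m M end.

(* [eta] interprets the free type variables, [rho] the bound ones. *)
Fixpoint interp (eta : nat -> sem) (rho : list sem) (T : ty) : sem :=
  match T with
  | TFVar X => svar (eta X)
  | TBVar i => svar (nth i rho full)
  | TArr A B => arr (interp eta rho A) (interp eta rho B)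
  | TBul A => bul (interp eta rho A)
  | TMu A => mufix (fun U => interp eta (U :: rho) A)
  end.

Definition upd (eta : nat -> sem) (X : nat) (U : sem) : nat -> sem :=
  fun Y => if Nat.eqb Y X then U else eta Y.

Lemma upd_eq eta X U : upd eta X U X = U.
Proof. unfold upd. rewrite Nat.eqb_refl. reflexivity. Qed.

Lemma upd_neq eta X U Y : Y <> X -> upd eta X U Y = eta Y.
Proof. intros H. unfold upd. apply Nat.eqb_neq in H. rewrite H. reflexivity. Qed.

Lemma app_term M N : is_term M -> is_term N -> is_term (App M N).
Proof. unfold is_term; simpl; intros -> ->; reflexivity. Qed.

Lemma interp_term T : forall eta rho n M, interp eta rho T n M -> is_term M.
Proof.
  induction T as [X|i|A _ B _|A IHA|A IHA]; simpl; intros eta rho n M H.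
  - apply H.
  - apply H.
  - apply H.
  - destruct n; [exact H | eapply IHA; eauto].
  - eapply IHA, H.
Qed.

Lemma arr_dist n U U' V V' : dist n U U' -> dist n V V' -> dist n (arr U V) (arr U' V').
Proof.
  intros HU HV m M Hm. unfold arr.
  split; intros [HM H]; split; auto; intros k N Hk HN;
    apply HV; try lia; apply H; auto; apply HU; auto; lia.
Qed.

Lemma bul_contractive n U V : dist n U V -> dist (S n) (bul U) (bul V).
Proof. intros H [|m] M Hm; simpl. reflexivity. apply H. lia. Qed.

(* ⊤-variants denote the set of all terms. *)
Lemma tv_full T : forall L rho0 rho eta n,
  tv L (Defs.tail T) = true -> length L = length rho0 ->
  (forall i k M, i < length rho0 -> k <= n -> is_term M -> nth i rho0 full k M) ->
  forall M, is_term M -> interp eta (rho0 ++ rho) T n M.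
Proof.
  induction T as [X|i|A _ B IHB|A IHA|A IHA]; simpl;
    intros L rho0 rho eta n Htv Hlen Hfull M HM.
  - discriminate.
  - split; auto.
    destruct (nth_error L i) eqn:E; [|discriminate].
    assert (i < length rho0).
    { rewrite <- Hlen. apply nth_error_Some. rewrite E; discriminate. }
    rewrite app_nth1 by auto. apply Hfull; auto.
  - split; auto. intros k N Hk HN.
    apply (IHB L); auto.
    + intros; apply Hfull; auto; lia.
    + apply app_term; auto. eapply interp_term; eauto.
  - destruct n; auto.
    apply (IHA (map (fun _ => true) L)); auto.
    rewrite length_map; auto.
  - unfold mufix.
    assert (Hj : forall j k M, k <= n -> is_term M ->
      iterS j (fun U => interp eta (U :: rho0 ++ rho) A) full k M).
    { induction j as [|j IHj]; simpl; intros k M' Hk HM'. exact I.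
      apply (IHA (false :: L) (_ :: rho0)); simpl; auto.
      intros [|i] k' M'' Hi Hk' HM''; simpl.
      - apply IHj; auto; lia.
      - apply Hfull; auto; lia. }
    apply Hj; auto.
Qed.

Lemma interp_top_variant T eta rho n M :
  top_variant T = true -> is_term M -> interp eta rho T n M.
Proof.
  intros H HM. apply (tv_full T [] [] rho eta n); simpl; auto. intros; lia.
Qed.

Lemma dist_top_variant T eta eta' rho rho' n : top_variant T = true ->
  dist n (interp eta rho T) (interp eta' rho' T).
Proof.
  intros Ht k M Hk. split; intros H; apply interp_top_variant; auto; eapply interp_term; eauto.
Qed.

(** * Guarded types and contractiveness *)

Fixpoint ty_lc (k : nat) (T : ty) : bool :=
  match T with
  | TFVar _ => true
  | TBVar i => Nat.ltb i k
  | TArr A B => ty_lc k A && ty_lc k B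
  | TBul A => ty_lc k A
  | TMu A => ty_lc (S k) A
  end.

(* [proper] for the bound variable with index [k]. *)
Fixpoint proper_bvar (k : nat) (T : ty) : bool :=
  match T with
  | TFVar _ => true
  | TBVar i => negb (Nat.eqb i k)
  | TArr A B => (proper_bvar k A && proper_bvar k B) || top_variant B
  | TBul _ => true
  | TMu A => proper_bvar (S k) A || top_variant (TMu A)
  end.

Fixpoint guarded (T : ty) : bool :=
  match T with
  | TFVar _ | TBVar _ => true
  | TArr A B => guarded A && guarded B
  | TBul A => guarded A
  | TMu A => guarded A && proper_bvar 0 A
  end.

Definition wf_ty (T : ty) : Prop := guarded T = true /\ ty_lc 0 T = true.

Lemma Forall2_dist_nth n rho rho' : Forall2 (dist n) rho rho' ->
  forall i, dist n (nth i rho full) (nth i rho' full).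
Proof. induction 1; intros [|i]; simpl; auto using dist_refl. Qed.

Lemma Forall2_dist_refl n rho : Forall2 (dist n) rho rho.
Proof. induction rho; constructor; auto using dist_refl. Qed.

Lemma Forall2_dist_mid n rho1 rho2 U V : dist n U V ->
  Forall2 (dist n) (rho1 ++ U :: rho2) (rho1 ++ V :: rho2).
Proof.
  intros H. apply Forall2_app; [|constructor]; auto using Forall2_dist_refl.
Qed.

Lemma nth_mid (rho1 rho2 : list sem) U V i : i <> length rho1 ->
  nth i (rho1 ++ U :: rho2) full = nth i (rho1 ++ V :: rho2) full.
Proof.
  intros H. destruct (Nat.lt_ge_cases i (length rho1)).
  - rewrite !app_nth1 by auto. reflexivity.
  - rewrite !app_nth2 by auto. destruct (i - length rho1) eqn:E; [lia|]. reflexivity.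
Qed.

(* Non-expansiveness in all variables and, when proper, contractiveness in a
   bound variable have to be proved simultaneously: [•] turns the former into
   the latter, and a μ-binder needs the latter to exist at all. *)
Lemma interp_dist T : guarded T = true ->
  (forall eta eta' rho rho' n, (forall X, dist n (eta X) (eta' X)) ->
     Forall2 (dist n) rho rho' -> dist n (interp eta rho T) (interp eta' rho' T))
  /\ (forall k, proper_bvar k T = true -> forall eta rho1 rho2 U V n,
       length rho1 = k -> dist n U V ->
       dist (S n) (interp eta (rho1 ++ U :: rho2) T) (interp eta (rho1 ++ V :: rho2) T)).
Proof.
  induction T as [Y|i|A IHA B IHB|A IHA|A IHA]; intros Hg; simpl in Hg.
  - split.
    + intros eta eta' rho rho' n He _ k M Hk. simpl. specialize (He Y k M Hk). unfold svar. tauto.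
    + intros. apply dist_refl.
  - split.
    + intros eta eta' rho rho' n _ Hr k M Hk. simpl.
      pose proof (Forall2_dist_nth n rho rho' Hr i k M Hk). unfold svar. tauto.
    + intros k Hp eta rho1 rho2 U V n Hl _. simpl in *.
      rewrite (nth_mid rho1 rho2 U V i). apply dist_refl.
      intros E; subst. rewrite Nat.eqb_refl in Hp. discriminate.
  - apply andb_prop in Hg as [HgA HgB].
    destruct (IHA HgA) as [NA CA], (IHB HgB) as [NB CB].
    split.
    + intros. apply arr_dist; auto.
    + intros k Hp eta rho1 rho2 U V n Hl H. simpl in Hp.
      destruct (proper_bvar k A && proper_bvar k B) eqn:E.
      * apply andb_prop in E as [E1 E2]. apply arr_dist; [apply (CA k) | apply (CB k)]; auto.
      * apply dist_top_variant, Hp.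
  - destruct (IHA Hg) as [NA _].
    split.
    + intros. apply dist_mono with (S n); [lia|]. apply bul_contractive, NA; auto.
    + intros. apply bul_contractive, NA; auto using dist_refl, Forall2_dist_mid.
  - apply andb_prop in Hg as [HgA Hp0].
    destruct (IHA HgA) as [NA CA].
    assert (Hc : forall eta rho, contractive (fun W => interp eta (W :: rho) A)).
    { intros eta rho n U V H. apply (CA 0 Hp0 eta [] rho U V n); auto. }
    split.
    + intros. apply mufix_dist; auto.
      intros W. apply NA; auto. constructor; auto using dist_refl.
    + intros k Hp eta rho1 rho2 U V n Hl H. simpl in Hp.
      destruct (proper_bvar (S k) A) eqn:E.
      * apply mufix_dist; auto. intros W.
        apply (CA (S k) E eta (W :: rho1) rho2 U V n); simpl; auto.
      * apply dist_top_variant, Hp.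
Qed.

Lemma interp_contractive A eta rho : guarded A = true -> proper_bvar 0 A = true ->
  contractive (fun U => interp eta (U :: rho) A).
Proof.
  intros Hg Hp n U V H. apply (proj2 (interp_dist A Hg) 0 Hp eta [] rho U V n); auto.
Qed.

Lemma ty_lc_mono T : forall j k, ty_lc j T = true -> j <= k -> ty_lc k T = true.
Proof.
  induction T; simpl; intros j k H Hjk; auto.
  - apply Nat.ltb_lt in H. apply Nat.ltb_lt. lia.
  - apply andb_prop in H as [H1 H2]. rewrite (IHT1 j k), (IHT2 j k); auto.
  - eapply IHT; eauto.
  - apply (IHT (S j)); auto. lia.
Qed.

Lemma ty_lc_close T : forall k X, ty_lc k T = true -> ty_lc (S k) (ty_close_rec k X T) = true.
Proof.
  induction T as [Y|i|A IHA B IHB|A IHA|A IHA]; simpl; intros k X Hl; auto.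
  - destruct (Y =? X); simpl; auto. apply Nat.ltb_lt; lia.
  - apply Nat.ltb_lt in Hl. apply Nat.ltb_lt; lia.
  - apply andb_prop in Hl as [H1 H2]. rewrite IHA, IHB; auto.
Qed.

Lemma ty_lc_subst T : forall k X U, ty_lc k T = true -> ty_lc 0 U = true ->
  ty_lc k (ty_subst X U T) = true.
Proof.
  induction T as [Y|i|A IHA B IHB|A IHA|A IHA]; simpl; intros k X U Hl HU; auto.
  - destruct (Y =? X); simpl; auto. eapply ty_lc_mono; eauto; lia.
  - apply andb_prop in Hl as [H1 H2]. rewrite IHA, IHB; auto.
Qed.

Lemma ty_open_close T : forall k X U, ty_lc k T = true ->
  ty_open_rec k U (ty_close_rec k X T) = ty_subst X U T.
Proof.
  induction T as [Y|i|A IHA B IHB|A IHA|A IHA]; simpl; intros k X U Hl.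
  - destruct (Y =? X); simpl; auto. rewrite Nat.eqb_refl; auto.
  - apply Nat.ltb_lt in Hl. destruct (i =? k) eqn:E; auto. apply Nat.eqb_eq in E; lia.
  - apply andb_prop in Hl as [H1 H2]. rewrite IHA, IHB; auto.
  - rewrite IHA; auto.
  - rewrite IHA; auto.
Qed.

Lemma tv_close T : forall L k X, length L <= k ->
  tv L (Defs.tail (ty_close_rec k X T)) = tv L (Defs.tail T).
Proof.
  induction T as [Y|i|A IHA B IHB|A IHA|A IHA]; simpl; intros L k X Hl; auto.
  - destruct (Y =? X); simpl; auto.
    destruct (nth_error L k) eqn:E; auto.
    assert (k < length L) by (apply nth_error_Some; rewrite E; discriminate). lia.
  - apply IHA. rewrite length_map; auto.
  - apply IHA. simpl; lia.
Qed.

Lemma top_variant_close T k X : top_variant (ty_close_rec k X T) = top_variant T.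
Proof. apply tv_close. simpl; lia. Qed.

Lemma top_variant_mu_close A k X :
  top_variant (TMu (ty_close_rec (S k) X A)) = top_variant (TMu A).
Proof. apply tv_close. simpl; lia. Qed.

Lemma top_variant_subst T X U : top_variant T = true -> top_variant (ty_subst X U T) = true.
Proof.
  unfold top_variant. generalize (@nil bool).
  induction T as [Y|i|A IHA B IHB|A IHA|A IHA]; simpl; intros L H; auto.
  discriminate.
Qed.

Lemma proper_bvar_close_proper T : forall k X, proper X T = true -> ty_lc k T = true ->
  proper_bvar k (ty_close_rec k X T) = true.
Proof.
  induction T as [Y|i|A IHA B IHB|A IHA|A IHA]; simpl; intros k X Hp Hl; auto.
  - destruct (Y =? X); simpl; auto. discriminate.
  - apply Nat.ltb_lt in Hl. destruct (i =? k) eqn:E; auto. apply Nat.eqb_eq in E; lia.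
  - apply andb_prop in Hl as [H1 H2]. rewrite top_variant_close.
    apply orb_prop in Hp as [Hp|Hp]; [|rewrite Hp; apply orb_true_r].
    apply andb_prop in Hp as [Hp1 Hp2]. rewrite IHA, IHB; auto.
  - rewrite top_variant_mu_close.
    apply orb_prop in Hp as [Hp|Hp]; [|rewrite Hp; apply orb_true_r].
    rewrite IHA; auto.
Qed.

Lemma proper_bvar_close T : forall j k X, proper_bvar j T = true -> j <> k ->
  proper_bvar j (ty_close_rec k X T) = true.
Proof.
  induction T as [Y|i|A IHA B IHB|A IHA|A IHA]; simpl; intros j k X Hp Hjk; auto.
  - destruct (Y =? X); simpl; auto. destruct (k =? j) eqn:E; auto. apply Nat.eqb_eq in E; lia.
  - rewrite top_variant_close.
    apply orb_prop in Hp as [Hp|Hp]; [|rewrite Hp; apply orb_true_r].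
    apply andb_prop in Hp as [Hp1 Hp2]. rewrite IHA, IHB; auto.
  - rewrite top_variant_mu_close.
    apply orb_prop in Hp as [Hp|Hp]; [|rewrite Hp; apply orb_true_r].
    rewrite IHA; auto.
Qed.

Lemma proper_bvar_lc T : forall j k, ty_lc j T = true -> j <= k -> proper_bvar k T = true.
Proof.
  induction T as [Y|i|A IHA B IHB|A IHA|A IHA]; simpl; intros j k Hl Hjk; auto.
  - apply Nat.ltb_lt in Hl. destruct (i =? k) eqn:E; auto. apply Nat.eqb_eq in E; lia.
  - apply andb_prop in Hl as [H1 H2]. rewrite (IHA j k), (IHB j k); auto.
  - rewrite (IHA (S j) (S k)); auto. lia.
Qed.

Lemma proper_bvar_subst T : forall k X U, proper_bvar k T = true -> ty_lc 0 U = true ->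
  proper_bvar k (ty_subst X U T) = true.
Proof.
  induction T as [Y|i|A IHA B IHB|A IHA|A IHA]; simpl; intros k X U Hp HU; auto.
  - destruct (Y =? X); auto. eapply proper_bvar_lc; eauto; lia.
  - apply orb_prop in Hp as [Hp|Hp].
    + apply andb_prop in Hp as [Hp1 Hp2]. rewrite IHA, IHB; auto.
    + rewrite top_variant_subst; auto. apply orb_true_r.
  - apply orb_prop in Hp as [Hp|Hp].
    + rewrite IHA; auto.
    + apply (top_variant_subst _ X U) in Hp. simpl in Hp. rewrite Hp. apply orb_true_r.
Qed.

Lemma guarded_close T : forall k X, guarded T = true -> guarded (ty_close_rec k X T) = true.
Proof.
  induction T as [Y|i|A IHA B IHB|A IHA|A IHA]; simpl; intros k X Hg; auto.
  - destruct (Y =? X); auto.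
  - apply andb_prop in Hg as [H1 H2]. rewrite IHA, IHB; auto.
  - apply andb_prop in Hg as [H1 H2]. rewrite IHA, proper_bvar_close; auto.
Qed.

Lemma guarded_subst T : forall X U, guarded T = true -> guarded U = true -> ty_lc 0 U = true ->
  guarded (ty_subst X U T) = true.
Proof.
  induction T as [Y|i|A IHA B IHB|A IHA|A IHA]; simpl; intros X U Hg HgU HU; auto.
  - destruct (Y =? X); auto.
  - apply andb_prop in Hg as [H1 H2]. rewrite IHA, IHB; auto.
  - apply andb_prop in Hg as [H1 H2]. rewrite IHA, proper_bvar_subst; auto.
Qed.

Lemma wf_ty_arr A B : wf_ty A -> wf_ty B -> wf_ty (TArr A B).
Proof. intros [H1 H2] [H3 H4]; split; simpl; apply andb_true_intro; auto. Qed.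

Lemma wf_ty_bul A : wf_ty A -> wf_ty (TBul A).
Proof. intros [H1 H2]; split; auto. Qed.

Lemma wf_ty_mu X A : wf_ty A -> proper X A = true -> wf_ty (TMu (ty_close X A)).
Proof.
  intros [Hg Hl] Hp. split; simpl.
  - unfold ty_close. rewrite guarded_close, proper_bvar_close_proper; auto.
  - apply ty_lc_close; auto.
Qed.

Lemma wf_ty_top : wf_ty top.
Proof. split; reflexivity. Qed.

Lemma is_type_wf T : is_type T -> wf_ty T.
Proof.
  induction 1; auto using wf_ty_arr, wf_ty_bul, wf_ty_mu. split; reflexivity.
Qed.

Lemma interp_ftv T : forall eta eta' rho, (forall X, In X (ftv T) -> eta X = eta' X) ->
  interp eta rho T = interp eta' rho T.
Proof.
  induction T as [Y|i|A IHA B IHB|A IHA|A IHA]; simpl; intros eta eta' rho H.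
  - rewrite (H Y); auto.
  - reflexivity.
  - rewrite (IHA eta eta'), (IHB eta eta'); auto;
      intros X HX; apply H; apply in_or_app; auto.
  - rewrite (IHA eta eta'); auto.
  - f_equal. apply functional_extensionality; intro U. apply IHA; auto.
Qed.

Lemma interp_close T : forall rho X U eta, ty_lc (length rho) T = true ->
  interp eta (rho ++ [U]) (ty_close_rec (length rho) X T) = interp (upd eta X U) rho T.
Proof.
  induction T as [Y|i|A IHA B IHB|A IHA|A IHA]; simpl; intros rho X U eta Hl.
  - unfold upd. destruct (Y =? X); simpl; auto.
    rewrite app_nth2, Nat.sub_diag by lia. reflexivity.
  - apply Nat.ltb_lt in Hl. rewrite app_nth1 by auto. reflexivity.
  - apply andb_prop in Hl as [H1 H2]. rewrite IHA, IHB; auto.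
  - rewrite IHA; auto.
  - f_equal. apply functional_extensionality; intro V. apply (IHA (V :: rho)); auto.
Qed.

Lemma interp_rho T : forall k eta rho rho', ty_lc k T = true ->
  (forall i, i < k -> nth i rho full = nth i rho' full) ->
  interp eta rho T = interp eta rho' T.
Proof.
  induction T as [Y|i|A IHA B IHB|A IHA|A IHA]; simpl; intros k eta rho rho' Hl H.
  - reflexivity.
  - apply Nat.ltb_lt in Hl. rewrite H; auto.
  - apply andb_prop in Hl as [H1 H2]. rewrite (IHA k eta rho rho'), (IHB k eta rho rho'); auto.
  - rewrite (IHA k eta rho rho'); auto.
  - f_equal. apply functional_extensionality; intro V.
    apply (IHA (S k)); auto. intros [|i] Hi; simpl; auto. apply H. lia.
Qed.

Lemma interp_closed T eta rho : ty_lc 0 T = true -> interp eta rho T = interp eta [] T.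
Proof. intros H. apply (interp_rho T 0); auto. intros; lia. Qed.

Lemma interp_subst T : forall rho X U eta, ty_lc 0 U = true ->
  interp eta rho (ty_subst X U T) = interp (upd eta X (interp eta [] U)) rho T.
Proof.
  induction T as [Y|i|A IHA B IHB|A IHA|A IHA]; simpl; intros rho X U eta Hl.
  - unfold upd. destruct (Y =? X); simpl; auto.
    rewrite interp_closed by auto. apply sem_ext. intros n M. unfold svar.
    split; [|tauto]. intros H; split; auto. eapply interp_term; eauto.
  - reflexivity.
  - rewrite IHA, IHB; auto.
  - rewrite IHA; auto.
  - f_equal. apply functional_extensionality; intro V. apply IHA; auto.
Qed.

Lemma interp_mu eta X A : ty_lc 0 A = true ->
  interp eta [] (TMu (ty_close X A)) = mufix (fun U => interp (upd eta X U) [] A).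
Proof.
  intros Hl. simpl. f_equal. apply functional_extensionality; intro U.
  apply (interp_close A [] X U eta); auto.
Qed.

Lemma contractive_upd eta X A : wf_ty A -> proper X A = true ->
  contractive (fun U => interp (upd eta X U) [] A).
Proof.
  intros [Hg Hl] Hp.
  assert (E : (fun U => interp (upd eta X U) [] A) = (fun U => interp eta [U] (ty_close X A))).
  { apply functional_extensionality; intro U. symmetry. apply (interp_close A [] X U eta); auto. }
  rewrite E. apply interp_contractive.
  - apply guarded_close; auto.
  - apply proper_bvar_close_proper; auto.
Qed.

(** * Soundness of type equality and subtyping *)

Lemma interp_eq_top_variant A B eta : top_variant A = true -> top_variant B = true ->
  interp eta [] A = interp eta [] B.
Proof.
  intros HA HB. apply sem_ext. intros n M.
  split; intros H; apply interp_top_variant; auto; eapply interp_term; eauto.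
Qed.

Lemma teq_sound A B : teq A B -> forall eta, interp eta [] A = interp eta [] B.
Proof.
  induction 1 as [A _|A B _ IH|A B C _ IH1 _ IH2|A B _ IH|A B C D _ IH1 _ IH2
                 |A _|A HA|X A C HA HC Hp _ IH|A B _ _]; intros eta.
  - reflexivity.
  - symmetry; auto.
  - rewrite IH1; auto.
  - simpl. rewrite IH. reflexivity.
  - simpl. rewrite IH1, IH2. reflexivity.
  - apply interp_eq_top_variant; reflexivity.
  - inversion HA as [| | |X A0 HA0 Hp]; subst. destruct (is_type_wf _ HA0) as [Hg Hl].
    unfold ty_open, ty_close. rewrite ty_open_close by auto.
    rewrite interp_subst by (apply ty_lc_close; auto).
    fold (ty_close X A0). rewrite interp_mu by auto.
    symmetry. apply (mufix_eq (fun U => interp (upd eta X U) [] A0)).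
    apply contractive_upd; auto. split; auto.
  - destruct (is_type_wf _ HA) as [_ HlA].
    rewrite interp_mu by (apply is_type_wf; auto).
    apply mufix_unique; [apply contractive_upd; auto; apply is_type_wf; auto|].
    cbv beta. rewrite <- interp_subst by auto. symmetry. apply IH.
  - apply sem_ext. intros [|n] M; simpl; unfold arr; split.
    + intros HM; split; auto. intros [|k] N Hk HN; [|lia]. apply app_term; auto.
    + tauto.
    + intros [HM H]. split; auto. intros [|k] N Hk HN.
      * apply app_term; auto.
      * apply H; auto. lia.
    + intros [HM H]. split; auto. intros k N Hk HN. apply (H (S k)); auto. lia.
Qed.

Lemma teq_wf A B : teq A B -> wf_ty A /\ wf_ty B.
Proof.
  induction 1 as [A HA|A B _ IH|A B C _ IH1 _ IH2|A B _ IH|A B C D _ IH1 _ IH2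
                 |A HA|A HA|X A C HA HC Hp _ _|A B HA HB].
  - split; apply is_type_wf; auto.
  - tauto.
  - tauto.
  - split; apply wf_ty_bul; tauto.
  - split; apply wf_ty_arr; tauto.
  - split; auto using wf_ty_arr, wf_ty_top, is_type_wf.
  - split. apply is_type_wf; auto.
    inversion HA as [| | |X A0 HA0 Hp]; subst. destruct (is_type_wf _ HA0) as [Hg Hl].
    destruct (is_type_wf _ HA) as [Hg' Hl'].
    unfold ty_open, ty_close. rewrite ty_open_close by auto.
    split. apply guarded_subst; auto. apply ty_lc_subst; auto.
  - split; [|apply wf_ty_mu]; auto using is_type_wf.
  - apply is_type_wf in HA, HB. auto using wf_ty_bul, wf_ty_arr.
Qed.

Lemma sub_wf g A B : sub g A B -> wf_ty A /\ wf_ty B.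
Proof.
  induction 1.
  - split; split; reflexivity.
  - split; auto using is_type_wf, wf_ty_top.
  - apply teq_wf; auto.
  - tauto.
  - split; apply wf_ty_bul; tauto.
  - split; apply wf_ty_arr; tauto.
  - split; apply wf_ty_mu; tauto.
  - split; auto using is_type_wf, wf_ty_bul.
Qed.

Definition down_closed (U : sem) : Prop := forall n M, U (S n) M -> U n M.

Definition expansion_closed (U : sem) : Prop :=
  forall n M M', is_term M -> beta M M' -> U n M' -> U n M.

Definition admissible (eta : nat -> sem) : Prop :=
  forall X, down_closed (eta X) /\ expansion_closed (eta X).

Lemma down_closed_le U : down_closed U -> forall a b M, a <= b -> U b M -> U a M.
Proof. intros HU a b M Hab. induction Hab; auto. Qed.

Lemma Forall_nth_full (P : sem -> Prop) rho i : P full -> Forall P rho -> P (nth i rho full).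
Proof. intros Hf H. revert i. induction H; intros [|i]; simpl; auto. Qed.

Lemma interp_down_closed T : guarded T = true -> forall eta rho,
  (forall X, down_closed (eta X)) -> Forall down_closed rho -> down_closed (interp eta rho T).
Proof.
  induction T as [Y|i|A IHA B IHB|A IHA|A IHA]; simpl; intros Hg eta rho He Hr.
  - intros n M [HM H]; split; auto. apply He, H.
  - intros n M [HM H]; split; auto.
    apply (Forall_nth_full down_closed rho i); auto. intros ? ? ?; exact I.
  - intros n M [HM H]; split; auto.
  - intros [|n] M H.
    + eapply interp_term; eauto.
    + apply IHA; auto.
  - apply andb_prop in Hg as [HgA HpA].
    set (F := fun U => interp eta (U :: rho) A).
    assert (Hj : forall j, down_closed (iterS j F full)).
    { induction j; simpl. intros ? ? ?; exact I. apply IHA; auto. }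
    intros n M H. apply (mufix_iterS F (interp_contractive A eta rho HgA HpA) n (S (S n)));
      [lia|]. apply Hj, H.
Qed.

Lemma interp_expansion_closed T : forall eta rho,
  (forall X, expansion_closed (eta X)) -> Forall expansion_closed rho ->
  expansion_closed (interp eta rho T).
Proof.
  induction T as [Y|i|A IHA B IHB|A IHA|A IHA]; simpl; intros eta rho He Hr.
  - intros n M M' HM Hb [_ H]; split; auto. eapply He; eauto.
  - intros n M M' HM Hb [_ H]; split; auto.
    apply (Forall_nth_full expansion_closed rho i) with (M' := M'); auto.
    intros ? ? ? ? ? ?; exact I.
  - intros n M M' HM Hb [_ H]; split; auto.
    intros k N Hk HN. apply (IHB eta rho He Hr k _ (App M' N)).
    + apply app_term; auto. eapply interp_term; eauto.
    + apply beta_appl; auto.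
    + apply H; auto.
  - intros [|n] M M' HM Hb H; auto. eapply IHA; eauto.
  - set (F := fun U => interp eta (U :: rho) A).
    assert (Hj : forall j, expansion_closed (iterS j F full)).
    { induction j; simpl. intros ? ? ? ? ? ?; exact I. apply IHA; auto. }
    intros n M M' HM Hb H. apply (Hj (S n) n M M'); auto.
Qed.

Lemma mufix_down_closed eta X A : wf_ty A -> proper X A = true ->
  (forall Z, down_closed (eta Z)) -> down_closed (mufix (fun U => interp (upd eta X U) [] A)).
Proof.
  intros HA Hp He. rewrite <- interp_mu by apply HA.
  apply interp_down_closed; auto. apply wf_ty_mu; auto.
Qed.

Lemma mufix_expansion_closed eta X A : wf_ty A -> (forall Z, expansion_closed (eta Z)) ->
  expansion_closed (mufix (fun U => interp (upd eta X U) [] A)).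
Proof.
  intros HA He. rewrite <- interp_mu by apply HA. apply interp_expansion_closed; auto.
Qed.

Definition sa_valid (g : sassum) (eta : nat -> sem) (n : nat) : Prop :=
  forall X Y, In (X, Y) g -> forall k M, k <= n -> eta X k M -> eta Y k M.

Lemma sa_valid_union g g1 g2 eta n : sa_union g g1 g2 -> sa_valid g eta n ->
  sa_valid g1 eta n /\ sa_valid g2 eta n.
Proof. intros Hu H. split; intros X Y Hin; apply H, Hu; auto. Qed.

Lemma sa_valid_mono g eta n m : m <= n -> sa_valid g eta n -> sa_valid g eta m.
Proof. intros Hm H X Y Hin k M Hk. apply H; auto. lia. Qed.

Lemma in_sa_ftv g Z W : In (Z, W) g -> In Z (sa_ftv g) /\ In W (sa_ftv g).
Proof.
  intros H. unfold sa_ftv. split; apply in_flat_map; exists (Z, W); simpl; auto.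
Qed.

Section SubSoundMu.

Variables (g g' : sassum) (X Y : nat) (A B : ty).
Hypothesis IH : forall eta, admissible eta -> forall n, sa_valid g' eta n ->
  forall M, interp eta [] A n M -> interp eta [] B n M.
Hypothesis Hunion : sa_union g' g [(X, Y)].
Hypothesis Hwf' : sa_wf g'.
Hypothesis HX : ~ In X (sa_ftv g ++ ftv B).
Hypothesis HY : ~ In Y (sa_ftv g ++ ftv A).
Hypotheses (HpA : proper X A = true) (HpB : proper Y B = true).
Hypotheses (HA : wf_ty A) (HB : wf_ty B).

(* The hypothesis [X ≼ Y] is realized at index m by the fixed point for A
   truncated below m, which is where Löb induction enters. *)
Lemma sub_sound_mu eta : admissible eta -> forall n, sa_valid g eta n ->
  forall M, interp eta [] (TMu (ty_close X A)) n M -> interp eta [] (TMu (ty_close Y B)) n M.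
Proof.
  intros Hadm n Hg.
  assert (HXY : X <> Y).
  { destruct Hwf' as [Hd _]. apply (Hd (X, Y)), Hunion. right; left; auto. }
  rewrite !interp_mu by (apply HA || apply HB).
  set (FA := fun U => interp (upd eta X U) [] A).
  set (FB := fun U => interp (upd eta Y U) [] B).
  apply mufix_incl; [apply contractive_upd; auto|].
  intros m Hm Hlt M HM.
  set (eta' := upd (upd eta X (trunc m (mufix FA))) Y (mufix FB)).
  assert (Hadm' : admissible eta').
  { intros Z. unfold eta', upd.
    destruct (Z =? Y); [|destruct (Z =? X)]; [split..|apply Hadm].
    - apply mufix_down_closed; auto. intros; apply Hadm.
    - apply mufix_expansion_closed; auto. intros; apply Hadm.
    - intros k Q [Hk H]. split; [lia|]. revert H. apply mufix_down_closed; auto.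
      intros; apply Hadm.
    - intros k Q Q' HQ Hb [Hk H]. split; auto. revert Hb H.
      apply mufix_expansion_closed; auto. intros; apply Hadm. }
  assert (Hg' : sa_valid g' eta' m).
  { intros Z W Hin k Q Hk H. apply Hunion in Hin as [Hin|[Heq|[]]].
    - assert (Hfresh : forall V, In V (sa_ftv g) -> V <> X /\ V <> Y).
      { intros V HV. split; intros ->; [apply HX|apply HY]; apply in_or_app; auto. }
      destruct (in_sa_ftv _ _ _ Hin) as [HZ HW].
      destruct (Hfresh Z HZ), (Hfresh W HW). unfold eta' in *.
      rewrite !upd_neq in * by auto.
      apply (Hg Z W); auto; lia.
    - injection Heq as <- <-. unfold eta' in *.
      rewrite upd_eq. rewrite upd_neq, upd_eq in H by auto.
      destruct H as [Hkm H]. apply Hlt; auto. }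
  assert (EA : interp eta' [] A = FA (trunc m (mufix FA))).
  { apply interp_ftv. intros Z HZ. apply upd_neq.
    intros ->. apply HY, in_or_app; auto. }
  assert (EB : interp eta' [] B = FB (mufix FB)).
  { apply interp_ftv. intros Z HZ. unfold eta', upd.
    destruct (Z =? Y); auto. destruct (Z =? X) eqn:E; auto.
    apply Nat.eqb_eq in E as ->. exfalso. apply HX, in_or_app; auto. }
  rewrite <- (mufix_eq FB) by (apply contractive_upd; auto).
  rewrite <- EB. apply (IH eta' Hadm' m Hg'). rewrite EA. exact HM.
Qed.

End SubSoundMu.

Theorem sub_sound g A B : sub g A B -> forall eta, admissible eta -> forall n,
  sa_valid g eta n -> forall M, interp eta [] A n M -> interp eta [] B n M.
Proof.
  induction 1 as [g X Y _ Hin|g A _ _|g A B _ Heq|g1 g2 g A B C _ IH1 _ IH2 Hu _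
                 |g A B _ IH|g1 g2 g A A' B B' _ IH1 _ IH2 Hu _
                 |g g' X Y A B Hsub IH Hu Hwf' _ HX HY HpA HpB|g A _ HA];
    intros eta Hadm n Hg M HM.
  - destruct HM as [HM H]. split; auto. eapply Hg; eauto.
  - apply interp_top_variant; auto. eapply interp_term; eauto.
  - rewrite <- (teq_sound A B Heq eta). auto.
  - destruct (sa_valid_union _ _ _ _ _ Hu Hg).
    apply (IH2 eta Hadm n), (IH1 eta Hadm n); auto.
  - destruct n as [|m]; simpl in *; auto.
    apply (IH eta Hadm m); auto. apply sa_valid_mono with (S m); auto.
  - destruct HM as [HM H]. split; auto. intros k N Hk HN.
    destruct (sa_valid_union _ _ _ _ _ Hu (sa_valid_mono _ _ _ _ Hk Hg)).
    apply (IH2 eta Hadm k), H, (IH1 eta Hadm k); auto.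
  - destruct (sub_wf _ _ _ Hsub).
    apply (sub_sound_mu g g' X Y A B IH Hu Hwf' HX HY HpA HpB); auto.
  - destruct n as [|m]; simpl; [eapply interp_term; eauto|].
    apply (interp_down_closed A); auto.
    + apply is_type_wf; auto.
    + intros Z; apply Hadm.
Qed.

(** * Soundness of typing *)

Fixpoint msubst (s : nat -> tm) (M : tm) : tm :=
  match M with
  | Var y => s y
  | BVar i => BVar i
  | Lam N => Lam (msubst s N)
  | App N P => App (msubst s N) (msubst s P)
  end.

Lemma msubst_Var M : msubst Var M = M.
Proof. induction M; simpl; congruence. Qed.

Lemma tm_lc_mono M : forall j k, tm_lc_at j M = true -> j <= k -> tm_lc_at k M = true.
Proof.
  induction M; simpl; intros j k H Hjk; auto.
  - apply Nat.ltb_lt in H. apply Nat.ltb_lt. lia.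
  - apply (IHM (S j)); auto; lia.
  - apply andb_prop in H as [H1 H2]. rewrite (IHM1 j k), (IHM2 j k); auto.
Qed.

Lemma tm_lift_lc M : forall c, tm_lc_at c M = true -> tm_lift c M = M.
Proof.
  induction M; simpl; intros c H; auto.
  - apply Nat.ltb_lt in H. destruct (c <=? n) eqn:E; auto. apply Nat.leb_le in E; lia.
  - rewrite IHM; auto.
  - apply andb_prop in H as [H1 H2]. rewrite IHM1, IHM2; auto.
Qed.

Lemma tm_bsubst_lc M : forall k N, tm_lc_at k M = true -> tm_bsubst k N M = M.
Proof.
  induction M; simpl; intros k N H; auto.
  - apply Nat.ltb_lt in H. destruct (n =? k) eqn:E; [apply Nat.eqb_eq in E; lia|].
    destruct (k <? n) eqn:E2; auto. apply Nat.ltb_lt in E2; lia.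
  - rewrite IHM; auto.
  - apply andb_prop in H as [H1 H2]. rewrite IHM1, IHM2; auto.
Qed.

Lemma msubst_lc M : forall k s, tm_lc_at k M = true -> (forall z, is_term (s z)) ->
  tm_lc_at k (msubst s M) = true.
Proof.
  induction M; simpl; intros k s H Hs; auto.
  - eapply tm_lc_mono; [apply Hs|lia].
  - apply andb_prop in H as [H1 H2]. rewrite IHM1, IHM2; auto.
Qed.

Lemma tm_lc_close M : forall k x, tm_lc_at k M = true ->
  tm_lc_at (S k) (tm_close_rec k x M) = true.
Proof.
  induction M; simpl; intros k x H; auto.
  - destruct (n =? x); simpl; auto. apply Nat.ltb_lt; lia.
  - apply Nat.ltb_lt in H. apply Nat.ltb_lt. lia.
  - apply andb_prop in H as [H1 H2]. rewrite IHM1, IHM2; auto.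
Qed.

Lemma bsubst_msubst_close M : forall k s x N, tm_lc_at k M = true ->
  (forall z, is_term (s z)) -> is_term N ->
  tm_bsubst k N (msubst s (tm_close_rec k x M)) =
  msubst (fun z => if z =? x then N else s z) M.
Proof.
  induction M; simpl; intros k s x N H Hs HN.
  - destruct (n =? x); simpl.
    + rewrite Nat.eqb_refl; auto.
    + apply tm_bsubst_lc. eapply tm_lc_mono; [apply Hs|lia].
  - apply Nat.ltb_lt in H. destruct (n =? k) eqn:E; [apply Nat.eqb_eq in E; lia|].
    destruct (k <? n) eqn:E2; auto. apply Nat.ltb_lt in E2; lia.
  - rewrite (tm_lift_lc N 0) by auto. rewrite IHM; auto.
  - apply andb_prop in H as [H1 H2]. rewrite IHM1, IHM2; auto.
Qed.

Lemma in_bul_ctx G x C : In (x, C) (bul_ctx G) -> exists B, C = TBul B /\ In (x, B) G.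
Proof.
  unfold bul_ctx. intros H. apply in_map_iff in H as [[y B] [E H]]. simpl in E.
  injection E as <- <-. eauto.
Qed.

Lemma bul_ctx_in G x B : In (x, B) G -> In (x, TBul B) (bul_ctx G).
Proof. intros H. unfold bul_ctx. apply in_map_iff. exists (x, B); auto. Qed.

Lemma ctx_ok_bul_ctx G : ctx_ok (bul_ctx G) -> ctx_ok G.
Proof.
  intros [H1 H2]. split.
  - intros x A B HA HB. apply bul_ctx_in in HA, HB.
    specialize (H1 _ _ _ HA HB). congruence.
  - intros x A HA. apply bul_ctx_in, H2 in HA. inversion HA; auto.
Qed.

Lemma typing_term G M A : typing G M A -> is_term M.
Proof.
  induction 1; try reflexivity; auto.
  - apply tm_lc_close; auto.
  - apply app_term; auto.
Qed.

Lemma typing_ctx_ok G M A : typing G M A -> ctx_ok G.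
Proof. induction 1; auto using ctx_ok_bul_ctx. Qed.

Lemma typing_wf G M A : typing G M A -> wf_ty A.
Proof.
  induction 1 as [G x A [_ Hok] Hin| |G M _ _|G M A B _ _ Hsub
                 |G G' x M A B _ IH Hu [_ Hok'] _|G1 G2 G M N A B _ [Hg Hl] _ _ _ _].
  - apply is_type_wf; eauto.
  - destruct IHtyping; split; auto.
  - apply wf_ty_top.
  - apply (sub_wf _ _ _ Hsub).
  - apply wf_ty_arr; auto. apply is_type_wf, (Hok' x), Hu. right; left; auto.
  - simpl in Hg, Hl. apply andb_prop in Hg as [_ Hg], Hl as [_ Hl]. split; auto.
Qed.

Definition ctx_valid (G : ctx) (eta : nat -> sem) (n : nat) (s : nat -> tm) : Prop :=
  forall x C, In (x, C) G -> interp eta [] C n (s x).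

Lemma ctx_valid_extend G G' x A eta n k s N :
  ctx_union G' G [(x, A)] -> ctx_ok G' -> ctx_ok G ->
  (forall X, down_closed (eta X)) -> k <= n ->
  ctx_valid G eta n s -> interp eta [] A k N ->
  ctx_valid G' eta k (fun z => if z =? x then N else s z).
Proof.
  intros Hu [Hfun' _] [_ Hok] Hdc Hk HG HN z C HC.
  apply Hu in HC as [HC|[HC|[]]].
  - destruct (z =? x) eqn:E.
    + apply Nat.eqb_eq in E as ->.
      replace C with A by (apply (Hfun' x); apply Hu; auto; right; left; auto).
      exact HN.
    + destruct (is_type_wf C (Hok z C HC)) as [HgC _].
      apply (down_closed_le _ (interp_down_closed C HgC eta [] Hdc (Forall_nil _)) k n); auto.
  - injection HC as <- <-. rewrite Nat.eqb_refl. exact HN.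
Qed.

Theorem typing_sound G M A : typing G M A -> forall eta, admissible eta -> forall n s,
  (forall z, is_term (s z)) -> ctx_valid G eta n s -> interp eta [] A n (msubst s M).
Proof.
  induction 1 as [G x A _ Hin|G M A _ IH|G M _ HM|G M A B _ IH Hsub
                 |G G' x M A B HMB IH Hu Hok' Hok|G1 G2 G M N A B _ IH1 _ IH2 Hu _];
    intros eta Hadm n s Hs HG.
  - apply HG, Hin.
  - apply (IH eta Hadm (S n) s Hs).
    intros x C HC. apply in_bul_ctx in HC as [B [-> HB]]. apply HG, HB.
  - apply interp_top_variant; auto. apply msubst_lc; auto.
  - apply (sub_sound [] A B Hsub eta Hadm n); auto. intros X Y [].
  - assert (HlM : is_term M) by (eapply typing_term; eauto).
    assert (HlLam : is_term (Lam (msubst s (tm_close x M)))).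
    { apply msubst_lc; auto. apply tm_lc_close; auto. }
    split; auto. intros k N Hk HN.
    assert (HlN : is_term N) by (eapply interp_term; eauto).
    apply (interp_expansion_closed B eta [] (fun X => proj2 (Hadm X)) (Forall_nil _) k _
             (tm_bsubst 0 N (msubst s (tm_close x M)))).
    + apply app_term; auto.
    + apply beta_redex.
    + unfold tm_close. rewrite bsubst_msubst_close by auto.
      apply IH; auto.
      * intros z. destruct (z =? x); auto.
      * apply (ctx_valid_extend G G' x A eta n); auto. intros X; apply Hadm.
  - assert (HG1 : ctx_valid G1 eta n s) by (intros x C HC; apply HG, Hu; auto).
    assert (HG2 : ctx_valid G2 eta n s) by (intros x C HC; apply HG, Hu; auto).
    destruct (IH1 eta Hadm n s Hs HG1) as [_ Happ].
    apply (Happ n _ (le_n n)), IH2; auto.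
Qed.

(** * Weak normalization at •-free types *)

Ltac case_nat_tests :=
  repeat (match goal with
  | |- context [Nat.eqb ?a ?b] => let E := fresh in destruct (Nat.eqb a b) eqn:E;
       [apply Nat.eqb_eq in E | apply Nat.eqb_neq in E]
  | |- context [Nat.ltb ?a ?b] => let E := fresh in destruct (Nat.ltb a b) eqn:E;
       [apply Nat.ltb_lt in E | apply Nat.ltb_ge in E]
  | |- context [Nat.leb ?a ?b] => let E := fresh in destruct (Nat.leb a b) eqn:E;
       [apply Nat.leb_le in E | apply Nat.leb_gt in E]
  end; simpl); try (exfalso; lia); try reflexivity; try (f_equal; lia).

Lemma bsubst_var_lift x N : forall c k, c <= k ->
  tm_bsubst (S k) (Var x) (tm_lift c N) = tm_lift c (tm_bsubst k (Var x) N).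
Proof.
  induction N; simpl; intros c k Hck.
  - reflexivity.
  - case_nat_tests.
  - f_equal. apply IHN. lia.
  - rewrite IHN1, IHN2; auto.
Qed.

Lemma bsubst_var_bsubst x Z : forall N j k, j <= k ->
  tm_bsubst k (Var x) (tm_bsubst j N Z) =
  tm_bsubst j (tm_bsubst k (Var x) N) (tm_bsubst (S k) (Var x) Z).
Proof.
  induction Z; simpl; intros N j k Hjk.
  - reflexivity.
  - case_nat_tests.
  - f_equal. rewrite IHZ by lia. f_equal. apply bsubst_var_lift. lia.
  - rewrite IHZ1, IHZ2; auto.
Qed.

Lemma beta_bsubst_var x P Q : beta P Q ->
  forall k, beta (tm_bsubst k (Var x) P) (tm_bsubst k (Var x) Q).
Proof.
  induction 1; intros k; simpl.
  - rewrite (bsubst_var_bsubst x M N 0 k) by lia. apply beta_redex.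
  - apply beta_appl; auto.
  - apply beta_appr; auto.
  - apply beta_lam; auto.
Qed.

(* Instantiating a bound variable by a free one creates no redex. *)
Lemma beta_bsubst_var_inv x P : forall k R, beta (tm_bsubst k (Var x) P) R ->
  exists Q, beta P Q /\ R = tm_bsubst k (Var x) Q.
Proof.
  induction P as [y|i|P IHP|P1 IHP1 P2 IHP2]; simpl; intros k R H.
  - inversion H.
  - destruct (i =? k); [|destruct (k <? i)]; inversion H.
  - inversion H; subst. destruct (IHP _ _ H1) as [Q [HQ ->]].
    exists (Lam Q); split; auto. apply beta_lam; auto.
  - inversion H; subst.
    + destruct P1 as [y|i|Z|Q1 Q2]; simpl in H1; try discriminate.
      * destruct (i =? k); [|destruct (k <? i)]; discriminate.
      * injection H1 as ->. exists (tm_bsubst 0 P2 Z). split. apply beta_redex.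
        rewrite (bsubst_var_bsubst x Z P2 0 k) by lia. reflexivity.
    + destruct (IHP1 _ _ H3) as [Q [HQ ->]]. exists (App Q P2); split; auto.
      apply beta_appl; auto.
    + destruct (IHP2 _ _ H3) as [Q [HQ ->]]. exists (App P1 Q); split; auto.
      apply beta_appr; auto.
Qed.

Lemma rt_beta_bsubst_var_inv x R N : clos_refl_trans_1n tm beta R N ->
  forall P, R = tm_bsubst 0 (Var x) P ->
  exists Q, clos_refl_trans tm beta P Q /\ N = tm_bsubst 0 (Var x) Q.
Proof.
  induction 1 as [|R0 R' N' HR _ IH]; intros P HP; subst.
  - exists P; split; auto. apply rt_refl.
  - destruct (beta_bsubst_var_inv x P 0 R' HR) as [Q [HQ ->]].
    destruct (IH Q eq_refl) as [Q' [HQ' ->]].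
    exists Q'; split; auto. eapply rt_trans; [apply rt_step; eauto|auto].
Qed.

Lemma rt_beta_lam M M' : clos_refl_trans tm beta M M' ->
  clos_refl_trans tm beta (Lam M) (Lam M').
Proof. induction 1; eauto using rt_step, rt_refl, rt_trans, beta_lam. Qed.

Lemma rt_beta_appl M M' N : clos_refl_trans tm beta M M' ->
  clos_refl_trans tm beta (App M N) (App M' N).
Proof. induction 1; eauto using rt_step, rt_refl, rt_trans, beta_appl. Qed.

Lemma rt_beta_appr M N N' : clos_refl_trans tm beta N N' ->
  clos_refl_trans tm beta (App M N) (App M N').
Proof. induction 1; eauto using rt_step, rt_refl, rt_trans, beta_appr. Qed.

Lemma normalizable_lam x P :
  beta_normalizable (tm_bsubst 0 (Var x) P) -> beta_normalizable (Lam P).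
Proof.
  intros [N [Hr Hn]]. apply clos_rt_rt1n in Hr.
  destruct (rt_beta_bsubst_var_inv x _ _ Hr P eq_refl) as [Q [HQ ->]].
  exists (Lam Q). split. apply rt_beta_lam; auto.
  intros R HR. inversion HR; subst. apply (Hn (tm_bsubst 0 (Var x) M')).
  apply beta_bsubst_var; auto.
Qed.

Lemma normalizable_app_var_inv x M : beta_normalizable (App M (Var x)) -> beta_normalizable M.
Proof.
  intros [N [Hr Hn]]. apply clos_rt_rt1n in Hr.
  remember (App M (Var x)) as R eqn:ER. revert M ER.
  induction Hr as [|R0 R' N0 HR HR' IH]; intros M0 ER; subst.
  - exists M0. split. apply rt_refl.
    intros M' HM'. apply (Hn (App M' (Var x))). apply beta_appl; auto.
  - inversion HR; subst.
    + apply (normalizable_lam x). exists N0. split; auto. apply clos_rt1n_rt; auto.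
    + destruct (IH Hn M' eq_refl) as [N' [HN' HN'n]].
      exists N'. split; auto. eapply rt_trans; [apply rt_step; eauto|auto].
    + inversion H2.
Qed.

Inductive neutral : tm -> Prop :=
| neutral_var x : neutral (Var x)
| neutral_app P N : neutral P -> is_term N -> beta_normalizable N -> neutral (App P N).

(* The normal form is again headed by a variable, so applying it creates no redex. *)
Lemma neutral_normalizable P : neutral P -> is_term P /\
  exists P', clos_refl_trans tm beta P P' /\ beta_normal P' /\ forall Z, P' <> Lam Z.
Proof.
  induction 1 as [x|P N _ [HP [P' [HPP' [HP'n HP'lam]]]] HN [N' [HNN' HN'n]]].
  - split. reflexivity.
    exists (Var x). split; [apply rt_refl|]. split; [intros N HN; inversion HN|discriminate].
  - split. apply app_term; auto.
    exists (App P' N'). split; [|split].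
    + eapply rt_trans; [apply rt_beta_appl | apply rt_beta_appr]; eauto.
    + intros R HR. inversion HR; subst; [eapply HP'lam | eapply HP'n | eapply HN'n]; eauto.
    + discriminate.
Qed.

Lemma tv_bullet_free T : forall L, bullet_free T = true -> (forall b, In b L -> b = false) ->
  tv L (Defs.tail T) = false.
Proof.
  induction T as [Y|i|A IHA B IHB|A IHA|A IHA]; simpl; intros L Hb HL; auto.
  - destruct (nth_error L i) eqn:E; auto. apply HL. eapply nth_error_In; eauto.
  - apply andb_prop in Hb as [_ Hb]. auto.
  - discriminate.
  - apply IHA; auto. intros b [<-|Hb']; auto.
Qed.

Lemma top_variant_bullet_free T : bullet_free T = true -> top_variant T = false.
Proof. intros H. apply tv_bullet_free; auto. intros b []. Qed.

(* Without • a type has no ⊤-variant subterm, so properness in a bound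
   variable means that it does not occur. *)
Lemma proper_bvar_bullet_free_lc T : forall k, bullet_free T = true ->
  ty_lc (S k) T = true -> proper_bvar k T = true -> ty_lc k T = true.
Proof.
  induction T as [Y|i|A IHA B IHB|A IHA|A IHA]; simpl; intros k Hb Hl Hp; auto.
  - apply Nat.ltb_lt in Hl. apply Nat.ltb_lt. destruct (i =? k) eqn:E; [discriminate|].
    apply Nat.eqb_neq in E. lia.
  - apply andb_prop in Hb as [Hb1 Hb2]. apply andb_prop in Hl as [Hl1 Hl2].
    rewrite top_variant_bullet_free, orb_false_r in Hp by auto.
    apply andb_prop in Hp as [Hp1 Hp2]. rewrite IHA, IHB; auto.
  - discriminate.
  - rewrite (top_variant_bullet_free (TMu A)), orb_false_r in Hp by auto. auto.
Qed.

Definition eta_wn : nat -> sem := fun _ _ M => beta_normalizable M.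

Lemma admissible_eta_wn : admissible eta_wn.
Proof.
  intros X. split.
  - intros n M H; exact H.
  - intros n M M' _ Hb [N [Hr Hn]]. exists N. split; auto.
    eapply rt_trans; [apply rt_step; eauto|auto].
Qed.

Lemma interp_bullet_free T : bullet_free T = true -> wf_ty T -> forall n,
  (forall M, interp eta_wn [] T n M -> beta_normalizable M) /\
  (forall P, neutral P -> interp eta_wn [] T n P).
Proof.
  induction T as [Y|i|A IHA B IHB|A IHA|A IHA]; simpl; intros Hb [Hg Hl] n.
  - split.
    + intros M [_ H]; exact H.
    + intros P HP. destruct (neutral_normalizable P HP) as [HlP [P' [H1 [H2 _]]]].
      split; auto. exists P'; auto.
  - discriminate.
  - apply andb_prop in Hb as [HbA HbB], Hg as [HgA HgB], Hl as [HlA HlB].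
    destruct (IHA HbA (conj HgA HlA) n) as [_ NA].
    split.
    + intros M [HM H]. apply (normalizable_app_var_inv 0).
      apply (IHB HbB (conj HgB HlB) n), H, NA; auto. constructor.
    + intros P HP. split; [apply neutral_normalizable; auto|].
      intros k N Hk HN. apply (IHB HbB (conj HgB HlB) k). constructor; auto.
      * eapply interp_term; eauto.
      * apply (IHA HbA (conj HgA HlA) k); auto.
  - discriminate.
  - apply andb_prop in Hg as [HgA HpA].
    assert (HlA : ty_lc 0 A = true) by (apply proper_bvar_bullet_free_lc; auto).
    unfold mufix. simpl. rewrite interp_closed by auto. apply IHA; auto. split; auto.
Qed.

Theorem theorem8 (G : ctx) (M : tm) (A : ty) :
  (forall x B, In (x, B) G -> bullet_free B = true) ->
  bullet_free A = true ->
  typing G M A ->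
  beta_normalizable M.
Proof.
  intros HG HA Hty.
  destruct (typing_ctx_ok _ _ _ Hty) as [_ Hok].
  assert (Hvalid : ctx_valid G eta_wn 0 Var).
  { intros x C HC. apply (interp_bullet_free C (HG _ _ HC) (is_type_wf C (Hok _ _ HC)) 0).
    constructor. }
  pose proof (typing_sound _ _ _ Hty eta_wn admissible_eta_wn 0 Var (fun _ => eq_refl) Hvalid)
    as HM.
  rewrite msubst_Var in HM.
  apply (interp_bullet_free A HA (typing_wf _ _ _ Hty) 0), HM.
Qed.
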